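(* Let $\alpha\in[0,\infty)^n$ be non-increasing and let $f\colon\mathcal{B}_n\to\mathcal{H}_d$ satisfy $\|f(x)-f(y)\|\le d_\alpha(x,y)$ for all $x,y$. Let $X$ be a $k$-homogeneous $\mathcal{B}_n$-valued random vector satisfying the stochastic covering property. Define random variables $Y_1,\dots,Y_k$ by: conditionally on $X$, $Y_1$ is uniform on $\mathrm{supp}\,X\setminus\{1,\dots,k\}$, and for $l=2,\dots,k$, conditionally on $X,Y_1,\dots,Y_{l-1}$, $Y_l$ is uniform on $\mathrm{supp}\,X\setminus(\{1,\dots,k\}\cup\{Y_1,\dots,Y_{l-1}\})$, where $\mathrm{supp}\,X=\{i:X_i=1\}$ and the uniform distribution on the empty set is the Dirac mass at $0$. Let $\mathcal{G}_0$ be trivial, $\mathcal{G}_l=\sigma(X_1,\dots,X_l)$ for $l\in[k]$ and $\mathcal{G}_{k+r}=\sigma(X_1,\dots,X_k,Y_1,\dots,Y_r)$ for $r\in[k]$, and $N_l=\mathbb{E}[f(X)\mid\mathcal{G}_l]-\mathbb{E}[f(X)\mid\mathcal{G}_{l-1}]$ for $l\in[2k]$. Then $N_l^2\preccurlyeq4\alpha_l^2I_d$ for $l\in[k]$, and $N_l^2\preccurlyeq4\alpha_k^2I_d$ for $l=k+1,\dots,2k$.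
   Context: $\mathcal{B}_n=\{0,1\}^n$, $\mathcal{H}_d$ the $d\times d$ Hermitian matrices, $\|\cdot\|$ operator norm, $\preccurlyeq$ positive semidefinite order, $I_d$ identity. $d_\alpha(x,y)=\sum_i\alpha_i\mathbf{1}\{x_i\ne y_i\}$. $X$ is $k$-homogeneous if a.s. exactly $k$ of its coordinates equal $1$. For $S\subset[n]$, $x_S=(x_i)_{i\in S}$; $x\triangleright y$ means $x=y$ or $x=y+e_i$. $X$ satisfies the stochastic covering property if for every $S\subset[n]$ and $x,y$ with $x_S\triangleright y_S$ there is a coupling $(U,V)$ of $\mathcal{L}(X_{S^c}\mid X_S=y_S)$ and $\mathcal{L}(X_{S^c}\mid X_S=x_S)$ with $U\triangleright V$ a.s. *)

From HB Require Import structures.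
From mathcomp Require Import all_boot all_order all_algebra.
From mathcomp Require Import complex.
From mathcomp Require Import reals.
Set Implicit Arguments. Unset Strict Implicit. Unset Printing Implicit Defensive.
Import Order.TTheory GRing.Theory Num.Theory.
Local Open Scope ring_scope.
Local Open Scope complex_scope.

Section Defs.
Variable R : realType.
Local Notation C := R[i].

Definition ctrans m p (A : 'M[C]_(m, p)) : 'M[C]_(p, m) := (map_mx (@Num.conj C) A)^T.
Definition hermitian_mx d (A : 'M[C]_d) : Prop := ctrans A = A.
Definition vnorm d (v : 'cV[C]_d) : R := Num.sqrt (\sum_i (@complex.Re R (v i 0) ^+ 2 + @complex.Im R (v i 0) ^+ 2)).
Definition opnorm d (A : 'M[C]_d) : R :=
  sup (fun r : R => exists v : 'cV[C]_d, vnorm v <= 1 /\ r = vnorm (A *m v)).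
Definition psd d (A : 'M[C]_d) : Prop :=
  forall v : 'cV[C]_d, 0 <= (ctrans v *m A *m v) 0 0.
Definition loewner d (A B : 'M[C]_d) : Prop := psd (B - A).

Definition cube n := {ffun 'I_n -> bool}.
Definition dalpha n (alpha : 'I_n -> R) (x y : cube n) : R :=
  \sum_i alpha i * (x i != y i)%:R.
Definition supp n (x : cube n) : {set 'I_n} := [set i | x i].

Definition agree n (T : {set 'I_n}) (x y : cube n) : bool :=
  [forall i in T, x i == y i].
Definition tri n (T : {set 'I_n}) (x y : cube n) : bool :=
  agree T x y ||
  [exists i in T, [&& x i, ~~ y i & [forall j in T, (j != i) ==> (x j == y j)]]].

Definition is_distr n (p : cube n -> R) : Prop :=
  (forall x, 0 <= p x) /\ \sum_x p x = 1.
Definition homogeneous n (k : nat) (p : cube n -> R) : Prop :=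
  forall x, 0 < p x -> #|supp x| = k.
Definition PS n (p : cube n -> R) (S : {set 'I_n}) (a : cube n) : R :=
  \sum_(x | agree S x a) p x.
Definition condlaw n (p : cube n -> R) (S : {set 'I_n}) (a u : cube n) : R :=
  if agree S u a then p u / PS p S a else 0.
Definition SCP n (p : cube n -> R) : Prop :=
  forall (S : {set 'I_n}) (a b : cube n), tri S a b ->
    0 < PS p S a -> 0 < PS p S b ->
    exists q : {ffun (cube n * cube n) -> R},
      [/\ forall uv, 0 <= q uv,
          forall u, \sum_v q (u, v) = condlaw p S b u,
          forall v, \sum_u q (u, v) = condlaw p S a v &
          forall uv, 0 < q uv -> tri (~: S) uv.1 uv.2].

(* ---------- joint law of (X, Y_1, ..., Y_k) ----------
   Y_l is encoded as an option 'I_n : Some i = coordinate i, None = the value 0.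
   Coordinates are 0-based, so the paper's {1,...,k} is {i | i < k}. *)
Definition Omega n k := (cube n * {ffun 'I_k -> option 'I_n})%type.
Definition avail n k (x : cube n) (y : {ffun 'I_k -> option 'I_n}) (l : 'I_k)
  : {set 'I_n} :=
  [set i | [&& x i, (k <= i)%N & [forall j : 'I_k, (j < l)%N ==> (y j != Some i)]]].
Definition unif n (S : {set 'I_n}) (o : option 'I_n) : R :=
  if S == set0 then (o == None)%:R
  else match o with Some i => (i \in S)%:R / #|S|%:R | None => 0 end.
Definition weight n k (p : cube n -> R) (w : Omega n k) : R :=
  p w.1 * \prod_(l : 'I_k) unif (avail w.1 w.2 l) (w.2 l).

(* w and w' are indistinguishable by G_l *)
Definition sameG n k (l : nat) (w w' : Omega n k) : bool :=
  [forall i : 'I_n, (i < minn l k)%N ==> (w.1 i == w'.1 i)] &&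
  [forall j : 'I_k, (j < l - k)%N ==> (w.2 j == w'.2 j)].
(* E[f(X) | G_l] evaluated at outcome w *)
Definition cexp n k d (p : cube n -> R) (f : cube n -> 'M[C]_d) (l : nat)
  (w : Omega n k) : 'M[C]_d :=
  ((\sum_(w' | sameG l w w') weight p w')^-1)%:C *:
    \sum_(w' | sameG l w w') (weight p w')%:C *: f w'.1.
Definition Nmart n k d (p : cube n -> R) (f : cube n -> 'M[C]_d) (l : nat)
  (w : Omega n k) : 'M[C]_d :=
  cexp p f l w - cexp p f l.-1 w.
End Defs.

(* Conditioning on G_l amounts to conditioning X on its coordinates in the set
   S_l revealed so far: the first min(l, k) coordinates and the coordinates
   Y_1, ..., Y_(l-k).  Indeed, once the later choices are summed out, the
   weight of the choices is the same for all outcomes of X that agree on the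
   first k coordinates and contain Y_1, ..., Y_(l-k).  Each step reveals at
   most one new coordinate i, and if x' is the observed x with coordinate i
   flipped, N_l = c (E[f(X) | X = x on S_l] - E[f(X) | X = x' on S_l]) with
   |c| <= 1.  The stochastic covering property couples these two conditional
   laws by pairs (U, V) that differ at i and at most one coordinate outside
   S_l, so ||f(U) - f(V)|| <= 2 alpha_(min(l,k)) by monotonicity of alpha.
   Convexity of the squared norm gives |N_l v| <= 2 alpha_(min(l,k)) |v|, that
   is N_l^2 <= 4 alpha_(min(l,k))^2 I since N_l is Hermitian. *)

From HB Require Import structures.
From mathcomp Require Import all_boot all_order all_algebra.
From mathcomp Require Import complex.
From mathcomp Require Import reals.
From mathcomp Require Import ring zify.
Import Order.TTheory GRing.Theory Num.Theory.
Local Open Scope ring_scope.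
Local Open Scope complex_scope.
Set Implicit Arguments. Unset Strict Implicit. Unset Printing Implicit Defensive.

Lemma sum_option (V : nmodType) (T : finType) (F : option T -> V) :
  \sum_o F o = F None + \sum_t F (Some t).
Proof.
rewrite (bigD1 None) //=; congr (_ + _).
rewrite (reindex_omap Some id) /=; last by case.
by apply: eq_bigl => t; rewrite eqxx.
Qed.

Lemma sum_pair (V : nmodType) (T1 T2 : finType) (F : T1 * T2 -> V) :
  \sum_t F t = \sum_u \sum_v F (u, v).
Proof. by rewrite pair_bigA; apply: eq_bigr => -[]. Qed.

Lemma sum_pair_cond (V : nmodType) (T1 T2 : finType) (P : pred (T1 * T2))
    (F : T1 * T2 -> V) :
  \sum_(t | P t) F t = \sum_u \sum_(v | P (u, v)) F (u, v).
Proof. by rewrite pair_big_dep; apply: eq_big => -[]. Qed.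

Lemma mean_split_diff (F : fieldType) (V : lmodType F) (P0 P1 : F) (A0 A1 : V) :
  P0 != 0 -> P1 != 0 -> P0 + P1 != 0 ->
  P0^-1 *: A0 - (P0 + P1)^-1 *: (A0 + A1) =
  (P1 / (P0 + P1)) *: (P0^-1 *: A0 - P1^-1 *: A1).
Proof.
move=> P0_neq0 P1_neq0 P_neq0.
rewrite scalerBr !scalerA scalerDr opprD addrA -scalerBl.
by congr (_ *: _ - _ *: _); field; apply/andP.
Qed.

Section SquaredNorms.
Variable R : realType.
Local Notation C := R[i].

Definition sqnormc (z : C) : R := complex.Re z ^+ 2 + complex.Im z ^+ 2.
Definition sqnormv d (v : 'cV[C]_d) : R := \sum_i sqnormc (v i 0).

Lemma sqnormc_ge0 z : 0 <= sqnormc z.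
Proof. by rewrite addr_ge0 // sqr_ge0. Qed.

Lemma sqnormv_ge0 d (v : 'cV[C]_d) : 0 <= sqnormv v.
Proof. by apply: sumr_ge0 => i _; apply: sqnormc_ge0. Qed.

Lemma sqnormcM (a b : C) : sqnormc (a * b) = sqnormc a * sqnormc b.
Proof. by case: a b => [a1 a2] [b1 b2]; rewrite /sqnormc /=; ring. Qed.

Lemma sqnormc_real (c : R) : sqnormc c%:C = c ^+ 2.
Proof. by rewrite /sqnormc /= expr0n addr0. Qed.

Lemma mul_conjc_sqnormc (z : C) : Num.conj z * z = (sqnormc z)%:C.
Proof.
case: z => a b; apply/eqP; rewrite /sqnormc eq_complex /=.
by apply/andP; split; apply/eqP; ring.
Qed.

Lemma sqnormc_eq0 z : sqnormc z = 0 -> z = 0.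
Proof.
case: z => a b /eqP; rewrite /sqnormc /= paddr_eq0 ?sqr_ge0 // !sqrf_eq0.
by case/andP => /eqP -> /eqP ->.
Qed.

Lemma sqnormv_eq0 d (v : 'cV[C]_d) : sqnormv v = 0 -> v = 0.
Proof.
move/eqP; rewrite psumr_eq0 => [/allP v0|i _]; last exact: sqnormc_ge0.
apply/matrixP => i j; rewrite ord1 mxE; apply/sqnormc_eq0/eqP.
exact: v0 (mem_index_enum _).
Qed.

Lemma sqnormc_le_sqnormv d (v : 'cV[C]_d) j : sqnormc (v j 0) <= sqnormv v.
Proof.
by rewrite /sqnormv (bigD1 j) //= lerDl; apply: sumr_ge0 => i _; apply: sqnormc_ge0.
Qed.

Lemma sqnormv_realZ d (c : R) (v : 'cV[C]_d) : sqnormv (c%:C *: v) = c ^+ 2 * sqnormv v.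
Proof.
by rewrite /sqnormv mulr_sumr; apply: eq_bigr => i _; rewrite mxE sqnormcM sqnormc_real.
Qed.

Lemma sqr_wsum_le (I : finType) (q r : I -> R) : (forall i, 0 <= q i) ->
  (\sum_i q i * r i) ^+ 2 <= (\sum_i q i) * \sum_i q i * r i ^+ 2.
Proof.
move=> q_ge0; set s := \sum_i q i; set t := \sum_i q i * r i.
have [s0|s_neq0] := eqVneq s 0.
  have q0 i : q i = 0.
    by apply/eqP; rewrite eq_le q_ge0 andbT -s0 /s (bigD1 i) //= lerDl sumr_ge0.
  by rewrite s0 mul0r /t big1 ?expr0n // => i _; rewrite q0 mul0r.
have s_gt0 : 0 < s by rewrite lt_def s_neq0 sumr_ge0.
(* the variance of [r] around its [q]-mean [t / s] is nonnegative *)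
have : 0 <= s * \sum_i q i * (r i - t / s) ^+ 2.
  by rewrite mulr_ge0 ?sumr_ge0 // => i _; rewrite mulr_ge0 ?sqr_ge0.
have -> : \sum_i q i * (r i - t / s) ^+ 2 =
    \sum_i q i * r i ^+ 2 - 2 * (t / s) * t + (t / s) ^+ 2 * s.
  rewrite /t /s !mulr_sumr -sumrN -!big_split /=.
  by apply: eq_bigr => i _; ring.
have -> : s * (\sum_i q i * r i ^+ 2 - 2 * (t / s) * t + (t / s) ^+ 2 * s) =
    s * \sum_i q i * r i ^+ 2 - t ^+ 2 by field.
by rewrite subr_ge0.
Qed.

Lemma sqnormc_wsum_le (I : finType) (q : I -> R) (z : I -> C) : (forall i, 0 <= q i) ->
  sqnormc (\sum_i (q i)%:C * z i) <= (\sum_i q i) * \sum_i q i * sqnormc (z i).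
Proof.
move=> q_ge0; rewrite /sqnormc !raddf_sum /=.
have ReZ (c : R) u : complex.Re (c%:C * u) = c * complex.Re u by case: u => a b /=; ring.
have ImZ (c : R) u : complex.Im (c%:C * u) = c * complex.Im u by case: u => a b /=; ring.
under [X in _ <= _ * X]eq_bigr do rewrite mulrDr.
rewrite big_split mulrDr /=.
by apply: lerD; [under eq_bigr do rewrite ReZ | under eq_bigr do rewrite ImZ];
  apply: sqr_wsum_le.
Qed.

End SquaredNorms.

Section Loewner.
Variable R : realType.
Local Notation C := R[i].

Lemma vnormE d (v : 'cV[C]_d) : vnorm v = Num.sqrt (sqnormv v).
Proof. by []. Qed.

Lemma sqnormv_mulmx_le d (D : 'M[C]_d) (v : 'cV[C]_d) : sqnormv v <= 1 ->
  sqnormv (D *m v) <= d%:R * \sum_i \sum_j sqnormc (D i j).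
Proof.
move=> v_le1; rewrite mulr_sumr; apply: ler_sum => i _; rewrite mxE.
have -> : \sum_j D i j * v j 0 = \sum_j (1 : R)%:C * (D i j * v j 0).
  by apply: eq_bigr => j _; rewrite mul1r.
apply: le_trans (sqnormc_wsum_le _ (fun _ => ler01)) _.
rewrite sumr_const card_ord ler_wpM2l // ler_sum // => j _.
rewrite mul1r sqnormcM ler_piMr ?sqnormc_ge0 //.
exact: le_trans (sqnormc_le_sqnormv _ _) v_le1.
Qed.

Lemma opnorm_ub d (D : 'M[C]_d) (v : 'cV[C]_d) :
  vnorm v <= 1 -> vnorm (D *m v) <= opnorm D.
Proof.
move=> v_le1; apply: (ub_le_sup _ (ex_intro _ v (conj v_le1 erefl))).
exists (Num.sqrt (d%:R * \sum_i \sum_j sqnormc (D i j))) => _ [u [u_le1 ->]].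
rewrite vnormE ler_wsqrtr // sqnormv_mulmx_le //.
by move: u_le1; rewrite vnormE -{1}sqrtr1 ler_sqrt.
Qed.

Lemma sqnormv_mulmx_opnorm d (D : 'M[C]_d) (e : R) (v : 'cV[C]_d) :
  opnorm D <= e -> sqnormv (D *m v) <= e ^+ 2 * sqnormv v.
Proof.
move=> De; have [/sqnormv_eq0 ->|v_neq0] := eqVneq (sqnormv v) 0.
  by rewrite mulmx0 /sqnormv big1 ?mulr0 // => i _; rewrite mxE /sqnormc /= expr0n addr0.
have v_gt0 : 0 < sqnormv v by rewrite lt_def v_neq0 sqnormv_ge0.
set t := Num.sqrt (sqnormv v).
have t2 : t ^+ 2 = sqnormv v by rewrite sqr_sqrtr // sqnormv_ge0.
have Du_le : vnorm (D *m ((t^-1)%:C *: v)) <= e.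
  apply: le_trans (opnorm_ub _ _) De.
  by rewrite vnormE sqnormv_realZ exprVn t2 mulVf ?sqrtr1.
have e_ge0 : 0 <= e := le_trans (sqrtr_ge0 _) Du_le.
move: Du_le; rewrite vnormE -ler_sqr ?nnegrE ?sqrtr_ge0 // sqr_sqrtr ?sqnormv_ge0 //.
by rewrite -scalemxAr sqnormv_realZ exprVn t2 mulrC ler_pdivrMr // mulrC.
Qed.

Lemma ctransM m p q (A : 'M[C]_(m, p)) (B : 'M[C]_(p, q)) :
  ctrans (A *m B) = ctrans B *m ctrans A.
Proof.
apply/matrixP => i j; rewrite !mxE rmorph_sum; apply: eq_bigr => l _.
by rewrite !mxE rmorphM mulrC.
Qed.

Lemma ctrans_mulmx_self d (u : 'cV[C]_d) : (ctrans u *m u) 0 0 = (sqnormv u)%:C.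
Proof.
by rewrite mxE rmorph_sum; apply: eq_bigr => j _; rewrite !mxE mul_conjc_sqnormc.
Qed.

Lemma hermitian_mxB d (A B : 'M[C]_d) :
  hermitian_mx A -> hermitian_mx B -> hermitian_mx (A - B).
Proof.
rewrite /hermitian_mx => hA hB; rewrite -[in RHS]hA -[in RHS]hB.
by apply/matrixP => i j; rewrite !mxE rmorphB.
Qed.

Lemma hermitian_sum_realZ d (T : finType) (c : T -> R) (M : T -> 'M[C]_d) :
  (forall t, hermitian_mx (M t)) -> hermitian_mx (\sum_t (c t)%:C *: M t).
Proof.
rewrite /hermitian_mx => hM; apply/matrixP => i j.
rewrite !mxE !summxE rmorph_sum; apply: eq_bigr => t _.
by rewrite -[in RHS]hM !mxE rmorphM; congr (_ * _); apply: conjc_real.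
Qed.

Lemma loewner_sqr_scalar d (N : 'M[C]_d) (b : R) : hermitian_mx N ->
  (forall v, sqnormv (N *m v) <= b * sqnormv v) -> loewner (N *m N) (b%:C)%:M.
Proof.
move=> hN Nb v.
rewrite mulmxBr mulmxBl mul_mx_scalar -scalemxAl mulmxA.
rewrite -(mulmxA (ctrans v *m N)) -{1}hN -ctransM.
have := ctrans_mulmx_self v; have := ctrans_mulmx_self (N *m v); rewrite !mxE => -> ->.
by rewrite -rmorphM -rmorphB ler0c subr_ge0.
Qed.

Lemma sqnormv_mix_le d (T : finType) (c : R) (q : T -> R) (w : T -> 'cV[C]_d) :
  c ^+ 2 <= 1 -> (forall t, 0 <= q t) -> \sum_t q t = 1 ->
  sqnormv (c%:C *: \sum_t (q t)%:C *: w t) <= \sum_t q t * sqnormv (w t).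
Proof.
move=> c_le1 q_ge0 q_sum1; rewrite sqnormv_realZ.
apply: le_trans (ler_piMl (sqnormv_ge0 _) c_le1) _.
under [leRHS]eq_bigr do rewrite mulr_sumr.
rewrite exchange_big /=; apply: ler_sum => i _; rewrite summxE.
rewrite (eq_bigr (fun t => (q t)%:C * w t i 0)) => [|t _]; last by rewrite mxE.
by apply: le_trans (sqnormc_wsum_le _ q_ge0) _; rewrite q_sum1 mul1r.
Qed.

Lemma loewner_sqr_mix d (T : finType) (N : 'M[C]_d) (c a : R) (q : T -> R)
    (D : T -> 'M[C]_d) :
  hermitian_mx N -> c ^+ 2 <= 1 -> (forall t, 0 <= q t) -> \sum_t q t = 1 ->
  (forall t, 0 < q t -> opnorm (D t) <= 2 * a) ->
  N = c%:C *: \sum_t (q t)%:C *: D t ->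
  loewner (N *m N) ((4 * a ^+ 2)%:C)%:M.
Proof.
move=> hN c_le1 q_ge0 q_sum1 D_le NE; apply: loewner_sqr_scalar => // v.
have -> : N *m v = c%:C *: \sum_t (q t)%:C *: (D t *m v).
  rewrite NE -scalemxAl mulmx_suml; congr (_ *: _).
  by apply: eq_bigr => t _; rewrite -scalemxAl.
apply: le_trans (sqnormv_mix_le _ c_le1 q_ge0 q_sum1) _.
rewrite -[leRHS]mul1r -{1}q_sum1 mulr_suml; apply: ler_sum => t _.
have [->|qt_neq0] := eqVneq (q t) 0; first by rewrite !mul0r.
have -> : 4 * a ^+ 2 = (2 * a) ^+ 2 by ring.
rewrite ler_wpM2l // sqnormv_mulmx_opnorm //.
by apply: D_le; rewrite lt_def qt_neq0 q_ge0.
Qed.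

End Loewner.

Section UniformChoices.
Variables (R : realType) (n k : nat).
Local Notation choices := {ffun 'I_k -> option 'I_n}.
Implicit Types (x : cube n) (y : choices) (S : {set 'I_n}) (l : 'I_k).

Definition choice_weight x y : R := \prod_(l : 'I_k) unif R (avail x y l) (y l).
Definition prefix_weight x y (r : nat) : R :=
  \prod_(l : 'I_k | (l < r)%N) unif R (avail x y l) (y l).
Definition agree_prefix (r : nat) y y' : bool :=
  [forall j : 'I_k, (j < r)%N ==> (y j == y' j)].
Definition set_choice y (j : 'I_k) (o : option 'I_n) : choices :=
  [ffun l => if l == j then o else y l].
Definition picked y (r : nat) : {set 'I_n} :=
  [set m | [exists j : 'I_k, (j < r)%N && (y j == Some m)]].
Definition low : {set 'I_n} := [set m : 'I_n | (m < k)%N].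
Definition high x : {set 'I_n} := [set m | x m && (k <= m)%N].

Lemma unif_ge0 S o : 0 <= unif R S o.
Proof.
by rewrite /unif; case: ifP => _; [|case: o => [m|]; rewrite ?divr_ge0].
Qed.

Lemma sum_unif S : \sum_o unif R S o = 1.
Proof.
rewrite sum_option /unif; case: ifP => [_|/negbT S_neq0].
  by rewrite eqxx big1 ?addr0.
rewrite add0r -mulr_suml.
have -> : \sum_m (m \in S)%:R = #|S|%:R :> R.
  by rewrite -sum1_card natr_sum [RHS]big_mkcond; apply: eq_bigr => m _; case: (m \in S).
by rewrite mulfV // pnatr_eq0 cards_eq0.
Qed.

Lemma unif_Some_notin S m : m \notin S -> unif R S (Some m) = 0.
Proof. by rewrite /unif => /negbTE ->; rewrite mul0r if_same. Qed.

Lemma unif_Some_gt0 S m : 0 < unif R S (Some m) -> m \in S.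
Proof. by apply: contraTT => /unif_Some_notin ->; rewrite ltxx. Qed.

Lemma eq_unif S S' o : #|S| = #|S'| ->
  (forall m, o = Some m -> (m \in S) = (m \in S')) -> unif R S o = unif R S' o.
Proof.
move=> cardS memS; rewrite /unif -!cards_eq0 cardS.
by case: o memS => [m|] // /(_ m erefl) ->.
Qed.

Lemma eq_avail x y y' l : (forall j : 'I_k, (j < l)%N -> y j = y' j) ->
  avail x y l = avail x y' l.
Proof.
move=> yy'; apply/setP => m; rewrite !inE; congr [&& _, _ & _].
by apply: eq_forallb => j; case: (ltnP j l) => //= /yy' ->.
Qed.

Lemma availE x y l : avail x y l = high x :\: picked y l.
Proof.
apply/setP => m; rewrite !inE negb_exists [RHS]andbC -andbA; do 2 congr (_ && _).
by apply: eq_forallb => j; rewrite negb_and implybE.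
Qed.

Lemma prefix_weight_set x y (j : 'I_k) o :
  prefix_weight x (set_choice y j o) j.+1 = prefix_weight x y j * unif R (avail x y j) o.
Proof.
have avail_set l : (l <= j)%N -> avail x (set_choice y j o) l = avail x y l.
  move=> lj; apply: eq_avail => j' j'l; rewrite ffunE ifN_eq //.
  by rewrite -(inj_eq val_inj) /= neq_ltn (leq_trans j'l lj).
rewrite /prefix_weight (bigD1 j) //= ffunE eqxx (avail_set j) // mulrC.
congr (_ * _).
apply: eq_big => l; first by rewrite ltnS ltn_neqAle -(inj_eq val_inj) andbC.
by move=> /andP [lj /negbTE l_neq_j]; rewrite ffunE l_neq_j avail_set.
Qed.

Lemma agree_prefix_set (j : 'I_k) y y0 o :
  agree_prefix j y y0 && (y j == o) = agree_prefix j.+1 y (set_choice y0 j o).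
Proof.
apply/andP/forallP => [[/forallP yy0 /eqP yj] l | yy0]; last first.
  split; last by have := yy0 j; rewrite ltnSn ffunE eqxx.
  apply/forallP => l; apply/implyP => lj; have := yy0 l.
  by rewrite ffunE ltnS (ltnW lj) ifN_eq // -(inj_eq val_inj) (ltn_eqF lj).
rewrite ffunE; case: (eqVneq l j) => [-> | l_neq_j]; first by rewrite yj eqxx implybT.
move: l_neq_j; rewrite -(inj_eq val_inj) ltnS leq_eqVlt => /negbTE ->.
exact: yy0.
Qed.

Lemma sum_choice_weight_prefix x y0 r : (r <= k)%N ->
  \sum_(y | agree_prefix r y y0) choice_weight x y = prefix_weight x y0 r.
Proof.
move=> /subnK; move: (k - r)%N => m; elim: m r y0 => [|m IH] r y0 mr_k.
  rewrite add0n in mr_k; subst r.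
  rewrite (eq_bigl (pred1 y0)) ?big_pred1_eq => [|y].
    by apply: eq_bigl => l; rewrite ltn_ord.
  apply/forallP/eqP => [yy0|-> j]; last by rewrite eqxx implybT.
  by apply/ffunP => j; apply/eqP; rewrite (implyP (yy0 j)).
have r_lt_k : (r < k)%N by rewrite -mr_k addSn ltnS leq_addl.
pose j := Ordinal r_lt_k.
rewrite (partition_big (fun y : choices => y j) xpredT) //=.
under eq_bigr => o _.
  rewrite (eq_bigl _ _ (fun y => agree_prefix_set j y y0 o)).
  rewrite IH ?addnS // prefix_weight_set.
over.
by rewrite -mulr_sumr sum_unif mulr1.
Qed.

Lemma choice_weight_gt0_unif x y l :
  0 < choice_weight x y -> 0 < unif R (avail x y l) (y l).
Proof.
move=> w_gt0; rewrite lt_def unif_ge0 andbT; apply: contraTneq w_gt0 => w0.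
by rewrite /choice_weight (bigD1 l) //= w0 mul0r ltxx.
Qed.

Lemma picked0 y : picked y 0 = set0.
Proof. by apply/setP => m; rewrite !inE; apply/existsP => -[]. Qed.

Lemma pickedS y (j : 'I_k) : picked y j.+1 = picked y j :|: [set m | y j == Some m].
Proof.
apply/setP => m; rewrite !inE; apply/existsP/orP => [[l /andP []] | [/existsP [l] | yj]].
- rewrite ltnS leq_eqVlt => /orP [/eqP/val_inj -> ->| lj ylm]; first by right.
  by left; apply/existsP; exists l; rewrite lj.
- by case/andP=> lj ylm; exists l; rewrite ylm (ltn_trans lj).
- by exists j; rewrite ltnSn.
Qed.

Lemma picked_sub_high x y r : 0 < choice_weight x y -> picked y r \subset high x.
Proof.
move=> w_gt0; apply/subsetP => m; rewrite inE => /existsP [j /andP [_ /eqP yj]].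
have := choice_weight_gt0_unif j w_gt0; rewrite yj => /unif_Some_gt0.
by rewrite availE => /setDP [].
Qed.

Lemma card_avail x y l : picked y l \subset high x ->
  #|avail x y l| = (#|high x| - #|picked y l|)%N.
Proof. by move=> /setIidPr sub; rewrite availE cardsD sub. Qed.

Lemma card_high x : #|supp x| = k -> #|high x| = (k - #|supp x :&: low|)%N.
Proof.
move=> card_x; rewrite -card_x -cardsD; apply: eq_card => m.
by rewrite !inE -leqNgt andbC.
Qed.

Lemma prefix_weight_agree x0 x y0 r :
  #|supp x0| = k -> #|supp x| = k -> ((0 < r)%N -> agree low x x0) ->
  0 < choice_weight x0 y0 ->
  prefix_weight x y0 r =
  if [forall m in picked y0 r, x m] then prefix_weight x0 y0 r else 0.
Proof.
move=> card_x0 card_x x_low w_gt0.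
case: ifP => [/forall_inP x_picked | /negbT]; last first.
  rewrite negb_forall_in => /existsP [m /andP [m_picked /negbTE xm]].
  move: m_picked; rewrite inE => /existsP [j /andP [jr /eqP yj]].
  rewrite /prefix_weight (bigD1 j) //= yj unif_Some_notin ?mul0r //.
  by rewrite availE !inE xm andbF.
apply: eq_bigr => l lr.
have /forall_inP ag := x_low (leq_ltn_trans (leq0n l) lr).
have picked_x : picked y0 l \subset high x.
  apply/subsetP => m ml; have /subsetP/(_ m ml) := picked_sub_high l w_gt0.
  rewrite !inE => /andP [_ ->]; rewrite andbT x_picked //.
  move: ml; rewrite !inE => /existsP [j /andP [jl yj]].
  by apply/existsP; exists j; rewrite yj (ltn_trans jl lr).
apply: eq_unif => [|m ym].
  rewrite card_avail // card_avail ?(picked_sub_high l w_gt0) //.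
  rewrite !card_high //; congr (_ - _ - _)%N; apply: eq_card => m.
  rewrite !inE; case: (ltnP m k) => mk; rewrite ?andbF //.
  by rewrite (eqP (ag m _)) ?inE.
have := choice_weight_gt0_unif l w_gt0; rewrite ym => /unif_Some_gt0 m_av.
rewrite m_av; move: m_av; rewrite !availE !inE => /and3P [-> _ ->] /=.
rewrite x_picked // inE; apply/existsP; exists l; by rewrite lr ym eqxx.
Qed.

End UniformChoices.

Section ConditionalMeans.
Variables (R : realType) (n d : nat) (p : cube n -> R) (f : cube n -> 'M[R[i]]_d).
Hypothesis p_ge0 : forall x, 0 <= p x.
Implicit Types (S : {set 'I_n}) (a x : cube n).

Definition condE S a : 'M[R[i]]_d := \sum_x (condlaw p S a x)%:C *: f x.

Definition flip a (i : 'I_n) : cube n := [ffun m => if m == i then ~~ a i else a m].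

Lemma agree_refl S a : agree S a a.
Proof. by apply/forall_inP. Qed.

Lemma agreeU S S' x a : agree (S :|: S') x a = agree S x a && agree S' x a.
Proof.
apply/forall_inP/andP => [xa | [/forall_inP xa /forall_inP xa'] m].
  by split; apply/forall_inP => m m_in; apply: xa; rewrite inE m_in ?orbT.
by rewrite inE => /orP [/xa | /xa'].
Qed.

Lemma agree1 i x a : agree [set i] x a = (x i == a i).
Proof.
by apply/forall_inP/idP => [/(_ i (set11 i)) | xa m /set1P ->].
Qed.

Lemma agree_flip S i x a : i \notin S -> agree S x (flip a i) = agree S x a.
Proof.
move=> iNS; apply: eq_forallb_in => m mS; rewrite ffunE ifN_eq //.
by apply: contraNneq iNS => <-.
Qed.

Lemma big_agree_flip (V : nmodType) (F : cube n -> V) S i a : i \notin S ->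
  \sum_(x | agree S x a) F x =
  \sum_(x | agree (i |: S) x a) F x + \sum_(x | agree (i |: S) x (flip a i)) F x.
Proof.
move=> iNS; rewrite !(big_mkcond (fun x => agree _ x _)) -big_split /=.
apply: eq_bigr => x _; rewrite !agreeU !agree1 agree_flip // ffunE eqxx.
by case: (agree S x a); case: (x i); case: (a i); rewrite /= ?addr0 ?add0r.
Qed.

Lemma PS_ge0 S a : 0 <= PS p S a.
Proof. exact: sumr_ge0. Qed.

Lemma PS_gt0 S a : 0 < p a -> 0 < PS p S a.
Proof.
move=> pa_gt0; rewrite /PS (bigD1 a) ?agree_refl //=.
by rewrite ltr_pwDl // sumr_ge0.
Qed.

Lemma sum_condlaw S a : 0 < PS p S a -> \sum_x condlaw p S a x = 1.
Proof. by move=> P_gt0; rewrite -big_mkcond -mulr_suml mulfV ?gt_eqF. Qed.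

Lemma condlaw_gt0_agree S a x : 0 < condlaw p S a x -> agree S x a.
Proof. by rewrite /condlaw; case: ifP; rewrite ?ltxx. Qed.

Lemma condEE S a :
  condE S a = ((PS p S a)^-1)%:C *: \sum_(x | agree S x a) (p x)%:C *: f x.
Proof.
rewrite /condE /condlaw scaler_sumr [RHS]big_mkcond /=.
apply: eq_bigr => x _; case: (agree S x a); last by rewrite rmorph0 !scale0r.
by rewrite scalerA -rmorphM mulrC.
Qed.

Lemma PS_flip S i a : i \notin S ->
  PS p S a = PS p (i |: S) a + PS p (i |: S) (flip a i).
Proof. exact: big_agree_flip. Qed.

Lemma condE_flip0 S i a : i \notin S -> PS p (i |: S) (flip a i) = 0 ->
  condE S a = condE (i |: S) a.
Proof.
move=> iNS P1_0; rewrite !condEE (PS_flip _ iNS) P1_0 addr0 (big_agree_flip _ _ iNS).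
have p0 := psumr_eq0P (fun x _ => p_ge0 x) P1_0.
by rewrite [X in _ + X]big1 ?addr0 // => x /p0 ->; rewrite scale0r.
Qed.

Lemma condE_flip_split S i a : i \notin S ->
  0 < PS p (i |: S) a -> 0 < PS p (i |: S) (flip a i) ->
  condE (i |: S) a - condE S a =
  (PS p (i |: S) (flip a i) / PS p S a)%:C *:
    (condE (i |: S) a - condE (i |: S) (flip a i)).
Proof.
move=> iNS P0_gt0 P1_gt0; rewrite !condEE (PS_flip _ iNS) (big_agree_flip _ _ iNS).
rewrite fmorph_div !fmorphV !rmorphD.
by apply: mean_split_diff; rewrite -?rmorphD fmorph_eq0 gt_eqF // addr_gt0.
Qed.

End ConditionalMeans.

Section ShortJumps.
Variables (R : realType) (n d : nat) (p : cube n -> R) (f : cube n -> 'M[R[i]]_d).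
Variable alpha : 'I_n -> R.
Hypothesis p_ge0 : forall x, 0 <= p x.
Hypothesis alpha_ge0 : forall i, 0 <= alpha i.
Implicit Types (S : {set 'I_n}) (a b u v x : cube n).

Definition short_jump_mix (N : 'M[R[i]]_d) (e : R) : Prop :=
  exists (c : R) (q : cube n * cube n -> R),
    [/\ c ^+ 2 <= 1, forall t, 0 <= q t, \sum_t q t = 1,
        forall t, 0 < q t -> dalpha alpha t.1 t.2 <= 2 * e &
        N = c%:C *: \sum_t (q t)%:C *: (f t.1 - f t.2)].

Lemma dalpha_xx u : dalpha alpha u u = 0.
Proof. by rewrite /dalpha big1 // => m _; rewrite eqxx mulr0. Qed.

Lemma dalpha_le2 u v i j : (forall m, u m != v m -> (m == i) || (m == j)) ->
  dalpha alpha u v <= alpha i + alpha j.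
Proof.
move=> uv_ij.
have alphaE m0 : \sum_m alpha m * (m == m0)%:R = alpha m0.
  by rewrite (bigD1 m0) //= eqxx mulr1 big1 ?addr0 // => m /negbTE ->; rewrite mulr0.
rewrite -(alphaE i) -(alphaE j) -big_split /=; apply: ler_sum => m _.
have [/uv_ij/orP [] /eqP ->|_] := boolP (u m != v m); last first.
  by rewrite mulr0 addr_ge0 ?mulr_ge0.
all: by rewrite eqxx mulr1 ?lerDl ?lerDr mulr_ge0.
Qed.

Lemma dalpha_tri S i a b u v e :
  alpha i <= e -> (forall j, j \notin S -> alpha j <= e) ->
  (forall m, m != i -> a m = b m) -> agree S u b -> agree S v a -> tri (~: S) u v ->
  dalpha alpha u v <= 2 * e.
Proof.
move=> ai a_out ab /forall_inP ub /forall_inP va uv.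
have in_S m : m \in S -> u m != v m -> m == i.
  move=> mS; rewrite (eqP (ub m mS)) (eqP (va m mS)).
  by apply: contraR => /ab ->; rewrite eqxx.
rewrite mulr2n mulrDl mul1r.
case/orP: uv => [/forall_inP uv | /existsP [j /andP [jS /and3P [_ _ /forall_inP uv]]]].
  apply: le_trans (dalpha_le2 (j := i) _) (lerD ai ai) => m.
  have [/in_S/[apply] -> //|mS] := boolP (m \in S).
  by rewrite (eqP (uv m _)) ?eqxx // inE.
apply: le_trans (dalpha_le2 (j := j) _) (lerD ai (a_out j _)); last by rewrite -in_setC.
move=> m uv_m; have [mS|mS] := boolP (m \in S); first by rewrite in_S.
apply: contraR uv_m; rewrite negb_or => /andP [_ mj].
by rewrite (eqP (implyP (uv m _) mj)) // inE.
Qed.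

Lemma short_jump_mix0 e : 0 <= e -> short_jump_mix 0 e.
Proof.
move=> e_ge0; pose x : cube n := [ffun => false].
exists 0, (fun t => (t == (x, x))%:R); split=> [||||].
- by rewrite expr0n ler01.
- by move=> t; rewrite ler0n.
- by rewrite (bigD1 (x, x)) //= eqxx big1 ?addr0 // => t /negbTE ->.
- by move=> t; have [-> _|] := eqVneq t (x, x); rewrite ?dalpha_xx ?mulr_ge0 ?ltxx.
- by rewrite rmorph0 scale0r.
Qed.

Lemma short_jump_mixZ N e (c : R) :
  c ^+ 2 <= 1 -> short_jump_mix N e -> short_jump_mix (c%:C *: N) e.
Proof.
move=> c_le1 [c' [q [c'_le1 q_ge0 q_sum1 q_short ->]]]; exists (c * c'), q.
by split=> //; [rewrite exprMn mulr_ile1 ?sqr_ge0 | rewrite scalerA -rmorphM].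
Qed.

Lemma loewner_short_jump_mix N e :
  (forall x y, opnorm (f x - f y) <= dalpha alpha x y) ->
  hermitian_mx N -> short_jump_mix N e -> loewner (N *m N) ((4 * e ^+ 2)%:C)%:M.
Proof.
move=> f_lip hN [c [q [c_le1 q_ge0 q_sum1 q_short NE]]].
apply: (loewner_sqr_mix hN c_le1 q_ge0 q_sum1 _ NE) => t /q_short.
exact: le_trans (f_lip _ _).
Qed.

Lemma condE_coupling S a b (Q : cube n * cube n -> R) :
  (forall u, \sum_v Q (u, v) = condlaw p S b u) ->
  (forall v, \sum_u Q (u, v) = condlaw p S a v) ->
  \sum_t (Q t)%:C *: (f t.1 - f t.2) = condE p f S b - condE p f S a.
Proof.
move=> Q1 Q2; rewrite sum_pair.
under eq_bigr do under eq_bigr do rewrite scalerBr.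
under eq_bigr do rewrite sumrB.
rewrite sumrB; congr (_ - _).
  by apply: eq_bigr => u _; rewrite -Q1 rmorph_sum scaler_suml.
by rewrite exchange_big; apply: eq_bigr => v _; rewrite -Q2 rmorph_sum scaler_suml.
Qed.

Lemma short_jump_mix_flip S i a b e : SCP p ->
  alpha i <= e -> (forall j, j \notin S -> alpha j <= e) ->
  i \in S -> a i -> ~~ b i -> (forall m, m != i -> a m = b m) ->
  0 < PS p S a -> 0 < PS p S b ->
  short_jump_mix (condE p f S b - condE p f S a) e.
Proof.
move=> scp ai a_out iS ai1 bi0 ab Pa_gt0 Pb_gt0.
have tri_ab : tri S a b.
  apply/orP; right; apply/existsP; exists i; rewrite iS ai1 bi0.
  by apply/forall_inP => m _; apply/implyP => /ab ->.
have [Q [Q_ge0 Q1 Q2 Q_tri]] := scp S a b tri_ab Pa_gt0 Pb_gt0.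
have Q_le_sum u v : Q (u, v) <= \sum_v' Q (u, v') /\ Q (u, v) <= \sum_u' Q (u', v).
  by split; [rewrite (bigD1 v) | rewrite (bigD1 u)]; rewrite //= lerDl sumr_ge0.
exists 1, (fun t => Q t); split=> //; first by rewrite expr1n.
- rewrite -(sum_condlaw Pb_gt0) sum_pair.
  by apply: eq_bigr => u _; rewrite Q1.
- move=> [u v] /= Quv_gt0; have [Q_le1 Q_le2] := Q_le_sum u v.
  apply: (dalpha_tri ai a_out ab _ _ (Q_tri _ Quv_gt0)); apply: (condlaw_gt0_agree (p := p)).
    by rewrite -Q1 (lt_le_trans Quv_gt0).
  by rewrite -Q2 (lt_le_trans Quv_gt0).
- by rewrite rmorph1 scale1r (condE_coupling Q1 Q2).
Qed.

Lemma short_jump_mix_increment S i x0 e : SCP p ->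
  alpha i <= e -> (forall j, j \notin i |: S -> alpha j <= e) -> 0 < p x0 ->
  short_jump_mix (condE p f (i |: S) x0 - condE p f S x0) e.
Proof.
move=> scp ai a_out px0_gt0; have e_ge0 := le_trans (alpha_ge0 i) ai.
have [iS|iNS] := boolP (i \in S).
  by rewrite (setUidPr _) ?sub1set // subrr; apply: short_jump_mix0.
set x1 := flip x0 i.
have [P1_0|P1_neq0] := eqVneq (PS p (i |: S) x1) 0.
  by rewrite -(condE_flip0 f p_ge0 iNS P1_0) subrr; apply: short_jump_mix0.
have P0_gt0 : 0 < PS p (i |: S) x0 := PS_gt0 p_ge0 _ px0_gt0.
have P1_gt0 : 0 < PS p (i |: S) x1 by rewrite lt_def P1_neq0 PS_ge0.
have c_le1 : (PS p (i |: S) x1 / PS p S x0) ^+ 2 <= 1.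
  rewrite (PS_flip p x0 iNS) exprn_ile1 ?divr_ge0 ?addr_ge0 ?PS_ge0 //.
  by rewrite ler_pdivrMr ?addr_gt0 // mul1r lerDr PS_ge0.
have x1_i : x1 i = ~~ x0 i by rewrite ffunE eqxx.
have x01 m : m != i -> x0 m = x1 m by move=> mi; rewrite ffunE (negbTE mi).
rewrite (condE_flip_split f iNS P0_gt0 P1_gt0).
have [x0_i|x0_i] := boolP (x0 i).
  rewrite -opprB scalerN -scaleNr -raddfN; apply: short_jump_mixZ; first by rewrite sqrrN.
  by apply: (short_jump_mix_flip scp ai a_out (setU11 i S) x0_i _ x01); rewrite ?x1_i ?x0_i.
apply: short_jump_mixZ c_le1 _.
by apply: (short_jump_mix_flip scp ai a_out (setU11 i S) _ x0_i); rewrite ?x1_i // => m /x01.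
Qed.

End ShortJumps.

Section Martingale.
Variables (R : realType) (n k d : nat) (alpha : 'I_n -> R).
Variables (f : cube n -> 'M[R[i]]_d) (p : cube n -> R).
Hypothesis alpha_ge0 : forall i, 0 <= alpha i.
Hypothesis alpha_mono : forall i j : 'I_n, (i <= j)%N -> alpha j <= alpha i.
Hypothesis f_herm : forall x, hermitian_mx (f x).
Hypothesis f_lip : forall x y, opnorm (f x - f y) <= dalpha alpha x y.
Hypothesis p_ge0 : forall x, 0 <= p x.
Hypothesis p_hom : homogeneous k p.
Hypothesis p_scp : SCP p.
Implicit Types (w : Omega n k) (x : cube n) (y : {ffun 'I_k -> option 'I_n}).

Definition revealed (l : nat) w : {set 'I_n} :=
  [set m : 'I_n | (m < minn l k)%N] :|: picked w.2 (l - k).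

Lemma weightE x y : weight p (x, y) = p x * choice_weight R x y.
Proof. by []. Qed.

Lemma weight_gt0 w : 0 < weight p w -> 0 < p w.1 /\ 0 < choice_weight R w.1 w.2.
Proof.
case: w => x y; rewrite weightE /= => w_gt0.
have cw_ge0 : 0 <= choice_weight R x y by apply: prodr_ge0 => l _; apply: unif_ge0.
by split; rewrite lt_def ?p_ge0 ?cw_ge0 andbT; apply: contraTneq w_gt0 => ->;
  rewrite ?mul0r ?mulr0 ltxx.
Qed.

Lemma sum_sameG_weight l x0 y0 x : (l <= 2 * k)%N -> 0 < weight p (x0, y0) ->
  \sum_(y | sameG l (x0, y0) (x, y)) weight p (x, y) =
  prefix_weight R x0 y0 (l - k) * ((agree (revealed l (x0, y0)) x x0)%:R * p x).
Proof.
move=> l_le w_gt0; have [/p_hom card_x0 cw_gt0] := weight_gt0 w_gt0.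
set A := [forall i : 'I_n, (i < minn l k)%N ==> (x0 i == x i)].
have sameGE y : sameG l (x0, y0) (x, y) = A && agree_prefix (l - k) y y0.
  by rewrite /sameG /=; congr (_ && _); apply: eq_forallb => j; rewrite eq_sym.
have revealedE :
    agree (revealed l (x0, y0)) x x0 = A && [forall m in picked y0 (l - k), x m].
  rewrite agreeU; congr (_ && _).
    apply/forall_inP/forallP => xx0 i; rewrite ?inE; last first.
      by move=> il; rewrite eq_sym (implyP (xx0 i)).
    by apply/implyP => il; rewrite eq_sym xx0 ?inE.
  apply: eq_forallb_in => m /(subsetP (picked_sub_high _ cw_gt0)).
  by rewrite inE => /andP [-> _].
rewrite (eq_bigl _ _ sameGE) revealedE.
have [A_x|] := boolP A; last by rewrite big_pred0 // mul0r mulr0.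
under eq_bigr do rewrite weightE.
rewrite -mulr_sumr sum_choice_weight_prefix; last by rewrite leq_subLR addnn -mul2n.
have [->|px_neq0] := eqVneq (p x) 0; first by rewrite mul0r !mulr0.
have /p_hom card_x : 0 < p x by rewrite lt_def px_neq0 p_ge0.
rewrite (prefix_weight_agree card_x0 card_x _ cw_gt0) => [|lk_gt0].
  by case: ifP; rewrite /= ?mul1r ?mul0r ?mulr0 // mulrC.
apply/forall_inP => m; rewrite inE => mk; rewrite eq_sym (implyP (forallP A_x m)) //.
by rewrite (minn_idPr _) // ltnW // -subn_gt0.
Qed.

Lemma cexp_condE l w : (l <= 2 * k)%N -> 0 < weight p w ->
  cexp p f l w = condE p f (revealed l w) w.1.
Proof.
case: w => x0 y0 l_le w_gt0; have [px0_gt0 cw_gt0] := weight_gt0 w_gt0.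
set K := prefix_weight R x0 y0 (l - k); set S := revealed l (x0, y0).
have K_gt0 : 0 < K.
  by apply: prodr_gt0 => j _; apply: choice_weight_gt0_unif.
have P_gt0 : 0 < PS p S x0 := PS_gt0 p_ge0 S px0_gt0.
have fsum x : \sum_(y | sameG l (x0, y0) (x, y)) (weight p (x, y))%:C *: f (x, y).1 =
    (K * ((agree S x x0)%:R * p x))%:C *: f x.
  by rewrite /= -scaler_suml -rmorph_sum sum_sameG_weight.
rewrite /cexp !sum_pair_cond.
under eq_bigr do rewrite sum_sameG_weight //.
under [X in _ *: X]eq_bigr do rewrite fsum.
have -> : \sum_x K * ((agree S x x0)%:R * p x) = K * PS p S x0.
  rewrite -mulr_sumr /PS [in RHS]big_mkcond; congr (_ * _).
  by apply: eq_bigr => x _; case: (agree S x x0); rewrite ?mul1r ?mul0r.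
rewrite /condE scaler_sumr; apply: eq_bigr => x _; rewrite scalerA -rmorphM /condlaw.
by case: (agree S x x0); rewrite ?mul0r ?mulr0 // mul1r; congr (_%:C *: _); field;
  rewrite !gt_eqF.
Qed.

Lemma notin_revealed l w j : j \notin revealed l w -> (minn l k <= j)%N.
Proof. by rewrite !inE negb_or -leqNgt => /andP []. Qed.

Lemma revealed_low w (i : 'I_n) : (i < k)%N -> revealed i.+1 w = i |: revealed i w.
Proof.
move=> ik; rewrite /revealed (minn_idPl ik) (minn_idPl (ltnW ik)).
have -> : (i.+1 - k = 0)%N by apply/eqP; rewrite subn_eq0.
have -> : (i - k = 0)%N by apply/eqP; rewrite subn_eq0 ltnW.
by rewrite picked0 !setU0; apply/setP => m; rewrite !inE ltnS leq_eqVlt.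
Qed.

Lemma revealed_high l w : (k <= n)%N -> (k < l <= 2 * k)%N ->
  0 < choice_weight R w.1 w.2 ->
  exists2 i : 'I_n, (k <= i.+1)%N & revealed l w = i |: revealed l.-1 w.
Proof.
move=> k_le_n /andP [kl l_le] cw_gt0.
have j_lt_k : ((l - k).-1 < k)%N by lia.
pose j := Ordinal j_lt_k.
have lkE : (l - k)%N = j.+1 by rewrite /= prednK // subn_gt0.
have l1kE : (l.-1 - k)%N = j by rewrite /= -subn1 subnAC subn1.
have [minn_l minn_l1] : minn l k = k /\ minn l.-1 k = k.
  by split; apply/minn_idPr; lia.
rewrite /revealed lkE l1kE minn_l minn_l1 pickedS.
case E: (w.2 j) => [m|].
  exists m.
    have /subsetP/(_ m) := picked_sub_high j.+1 cw_gt0.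
    by rewrite pickedS !inE E eqxx orbT => /(_ isT) /andP [_ /leqW].
  apply/setP => m'; rewrite !inE [m' == m]eq_sym -[m == m']/(Some m == Some m').
  by case: (Some m == Some m'); rewrite ?orbT ?orbF.
have k_gt0 : (0 < k)%N by lia.
have km1 : (k.-1 < n)%N by lia.
exists (Ordinal km1); first by rewrite /= prednK.
apply/setP => m'; rewrite !inE orbF; case: eqP => // ->.
by rewrite /= prednK ?leqnn.
Qed.

Lemma loewner_Nmart l w (i i0 : 'I_n) : (l <= 2 * k)%N -> 0 < weight p w ->
  revealed l w = i |: revealed l.-1 w -> (i0 <= i)%N -> (i0 < minn l k)%N ->
  loewner (Nmart p f l w *m Nmart p f l w) ((4 * alpha i0 ^+ 2)%:C)%:M.
Proof.
move=> l_le w_gt0 revealedE i0_le_i i0_lt; have [px_gt0 _] := weight_gt0 w_gt0.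
rewrite /Nmart !cexp_condE ?(leq_trans (leq_pred l)) // revealedE.
apply: loewner_short_jump_mix f_lip _ _.
  by apply: hermitian_mxB; apply: hermitian_sum_realZ.
apply: short_jump_mix_increment => //; first exact: alpha_mono.
move=> j; rewrite -revealedE => /notin_revealed lj; apply: alpha_mono.
exact: ltnW (leq_trans i0_lt lj).
Qed.

End Martingale.

Local Close Scope complex_scope.
Unset Implicit Arguments.
Set Strict Implicit.

Theorem lemma5p2 (R : realType) (n k d : nat) (alpha : 'I_n -> R)
  (f : cube n -> 'M[R[i]]_d) (p : cube n -> R) :
  (forall i, 0 <= alpha i) ->
  (forall i j : 'I_n, (i <= j)%N -> alpha j <= alpha i) ->
  (forall x, hermitian_mx (f x)) ->
  (forall x y, opnorm (f x - f y) <= dalpha alpha x y) ->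
  is_distr p -> homogeneous k p -> SCP p ->
  forall w : Omega n k, 0 < weight p w ->
    (forall i : 'I_n, (i < k)%N ->
       loewner (Nmart p f i.+1 w *m Nmart p f i.+1 w)
               ((4 * alpha i ^+ 2)%:C%C)%:M) /\
    (forall i : 'I_n, i.+1 = k -> forall l : nat, (k < l <= 2 * k)%N ->
       loewner (Nmart p f l w *m Nmart p f l w)
               ((4 * alpha i ^+ 2)%:C%C)%:M).
Proof.
move=> alpha_ge0 alpha_mono f_herm f_lip [p_ge0 _] p_hom p_scp w w_gt0.
have Nmart_le := loewner_Nmart alpha_ge0 alpha_mono f_herm f_lip p_ge0 p_hom p_scp.
split=> [i ik | i ik l lk].
  by apply: (Nmart_le _ _ i) (revealed_low w ik) _ _ => //; lia.
have [_ cw_gt0] := weight_gt0 p_ge0 w_gt0.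
have k_le_n : (k <= n)%N by rewrite -ik ltn_ord.
have [j kj revealedE] := revealed_high k_le_n lk cw_gt0.
by apply: (Nmart_le _ _ j) revealedE _ _ => //; lia.
Qed.
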